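(* Let $A$ be an integral quantum B-algebra, let $X,F\in U(A)$, let $F$ be a filter of $A$, and assume $1\in X\cap F$. Write $W=\mu_F(X)$. Then: (1) $W\cdot\mu_F(W\leadsto X)=W=\mu_F(W\to X)\cdot W$; (2) $\mu_F(W\to X)\to(W\to X)=W\to X$; (3) $\mu_F(W\leadsto X)\leadsto(W\leadsto X)=W\leadsto X$; (4) $(W\to X)\cdot\mu_F(W\to X)=W\to X$; (5) $\mu_F(W\leadsto X)\cdot(W\leadsto X)=W\leadsto X$; (6) $\mu_F(W\to X)=\mu_F(W\to X)\cdot\mu_F(W\to X)$, and $\mu_F(W\to X)$ is a filter of $A$ whenever $1\in\mu_F(W\to X)$; (7) $\mu_F(W\leadsto X)=\mu_F(W\leadsto X)\cdot\mu_F(W\leadsto X)$, and $\mu_F(W\leadsto X)$ is a filter of $A$ whenever $1\in\mu_F(W\leadsto X)$.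
   Context: A quantum B-algebra is a poset $(A,\le)$ with binary operations $\to,\leadsto$ such that for all $x,y,z\in A$: $y\to z\le(x\to y)\to(x\to z)$; $y\leadsto z\le(x\leadsto y)\leadsto(x\leadsto z)$; $y\le z$ implies $x\to y\le x\to z$; and $x\le y\to z$ iff $y\le x\leadsto z$. It is integral if it has a greatest element $1$ with $1\to x=1\leadsto x=x$ for all $x$. $U(A)$ denotes the set of all upper subsets of $A$ (including $\emptyset$), a quantale under inclusion with multiplication $X\cdot Y=\{a\in A\mid\exists y\in Y:\ y\to a\in X\}$. Its residuals are: for $Y,Z\in U(A)$, $Y\to Z$ is the largest $V\in U(A)$ with $V\cdot Y\subseteq Z$, and for $X,Z\in U(A)$, $X\leadsto Z$ is the largest $V\in U(A)$ with $X\cdot V\subseteq Z$. A filter of $A$ is a nonempty $F\in U(A)$ with $F\cdot F\subseteq F$. For $F,X\in U(A)$, $\mu_F(X)=F\cap X$. *)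

Set Implicit Arguments.

Section QBA.
Variable A : Type.
Variable le : A -> A -> Prop.
Variables imp limp : A -> A -> A.
Variable one : A.

Definition is_poset : Prop :=
  (forall x, le x x) /\
  (forall x y, le x y -> le y x -> x = y) /\
  (forall x y z, le x y -> le y z -> le x z).

Definition is_quantum_B_algebra : Prop :=
  is_poset /\
  (forall x y z, le (imp y z) (imp (imp x y) (imp x z))) /\
  (forall x y z, le (limp y z) (limp (limp x y) (limp x z))) /\
  (forall x y z, le y z -> le (imp x y) (imp x z)) /\
  (forall x y z, le x (imp y z) <-> le y (limp x z)).

Definition is_integral_quantum_B_algebra : Prop :=
  is_quantum_B_algebra /\
  (forall x, le x one) /\
  (forall x, imp one x = x /\ limp one x = x).

(* upper subsets (elements of U(A), including the empty set) *)
Definition upper (X : A -> Prop) : Prop :=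
  forall x y, X x -> le x y -> X y.

Definition subset (X Y : A -> Prop) : Prop := forall a, X a -> Y a.

Definition Umul (X Y : A -> Prop) : A -> Prop :=
  fun a => exists y, Y y /\ X (imp y a).

(* residuals of U(A): Y -> Z is the largest upper V with V . Y <= Z,
   realised as the union of all such V *)
Definition Uimp (Y Z : A -> Prop) : A -> Prop :=
  fun a => exists V, upper V /\ subset (Umul V Y) Z /\ V a.

(* X ~> Z is the largest upper V with X . V <= Z *)
Definition Ulimp (X Z : A -> Prop) : A -> Prop :=
  fun a => exists V, upper V /\ subset (Umul X V) Z /\ V a.

Definition is_filter (F : A -> Prop) : Prop :=
  (exists a, F a) /\ upper F /\ subset (Umul F F) F.

Definition mu (F X : A -> Prop) : A -> Prop := fun a => F a /\ X a.

End QBA.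

(* Every set involved contains 1 (W is contained in X, so 1 lies in W -> X and
   in W ~> X), and in an integral quantum B-algebra a set V containing 1 is a weak
   two-sided unit: Y <= Y . V and Y <= V . Y.  Each identity thus reduces to one
   inclusion, which follows from F . F <= F, the residuation laws of U(A) and
   associativity; e.g. for M = mu_F(W -> X) we have M . W <= F /\ X = W, hence
   ((W -> X) . M) . W <= (W -> X) . (M . W) <= (W -> X) . W <= X. *)

From Stdlib Require Import FunctionalExtensionality PropExtensionality.

Set Implicit Arguments.

Lemma subset_refl (A : Type) (X : A -> Prop) : subset X X.
Proof. intros a Xa; exact Xa. Qed.

Lemma subset_antisym (A : Type) (X Y : A -> Prop) :
  subset X Y -> subset Y X -> X = Y.
Proof.
  intros HXY HYX; apply functional_extensionality; intro a.
  apply propositional_extensionality; split; [apply HXY | apply HYX].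
Qed.

Section UpperSets.

Variables (A : Type) (le : A -> A -> Prop) (imp limp : A -> A -> A) (one : A).
Hypothesis HA : is_integral_quantum_B_algebra le imp limp one.

Lemma le_refl x : le x x.
Proof. destruct HA as [[[H _] _] _]; apply H. Qed.

Lemma le_antisym x y : le x y -> le y x -> x = y.
Proof. destruct HA as [[[_ [H _]] _] _]; apply H. Qed.

Lemma le_trans x y z : le x y -> le y z -> le x z.
Proof. destruct HA as [[[_ [_ H]] _] _]; apply H. Qed.

Lemma imp_le_imp_imp x y z : le (imp y z) (imp (imp x y) (imp x z)).
Proof. destruct HA as [[_ [H _]] _]; apply H. Qed.

Lemma limp_le_limp_limp x y z : le (limp y z) (limp (limp x y) (limp x z)).
Proof. destruct HA as [[_ [_ [H _]]] _]; apply H. Qed.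

Lemma imp_monotone x y z : le y z -> le (imp x y) (imp x z).
Proof. destruct HA as [[_ [_ [_ [H _]]]] _]; apply H. Qed.

Lemma le_imp_limp x y z : le x (imp y z) <-> le y (limp x z).
Proof. destruct HA as [[_ [_ [_ [_ H]]]] _]; apply H. Qed.

Lemma le_one x : le x one.
Proof. destruct HA as [_ [H _]]; apply H. Qed.

Lemma imp_one_l x : imp one x = x.
Proof. destruct HA as [_ [_ H]]; apply H. Qed.

Lemma limp_one_l x : limp one x = x.
Proof. destruct HA as [_ [_ H]]; apply H. Qed.

Lemma le_of_one_le_imp y a : le one (imp y a) -> le y a.
Proof. intro H; apply le_imp_limp in H; rewrite limp_one_l in H; exact H. Qed.

Lemma imp_eq_one_of_le y a : le y a -> imp y a = one.
Proof.
  intro H; apply le_antisym; [apply le_one |].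
  apply le_imp_limp; rewrite limp_one_l; exact H.
Qed.

Lemma mu_upper F X : upper le F -> upper le X -> upper le (mu F X).
Proof. intros HF HX a b [Fa Xa] Hab; split; [exact (HF a b Fa Hab) | exact (HX a b Xa Hab)]. Qed.

Lemma mu_subset_l (F Y : A -> Prop) : subset (mu F Y) F.
Proof. intros a Ha; apply Ha. Qed.

Lemma mu_subset_r (F Y : A -> Prop) : subset (mu F Y) Y.
Proof. intros a Ha; apply Ha. Qed.

Lemma Umul_subset X X' Y Y' :
  subset X X' -> subset Y Y' -> subset (Umul imp X Y) (Umul imp X' Y').
Proof. intros HX HY a [y [Yy Xya]]; exists y; split; [apply HY | apply HX]; assumption. Qed.

Lemma Umul_upper X Y : upper le X -> upper le (Umul imp X Y).
Proof.
  intros HX a b [y [Yy Xya]] Hab; exists y; split; [exact Yy |].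
  exact (HX _ _ Xya (imp_monotone y Hab)).
Qed.

Lemma Umul_unit_r X V : V one -> subset X (Umul imp X V).
Proof. intros V1 a Xa; exists one; rewrite imp_one_l; split; assumption. Qed.

Lemma Umul_unit_l V Y : V one -> subset Y (Umul imp V Y).
Proof.
  intros V1 a Ya; exists a; split; [exact Ya |].
  rewrite imp_eq_one_of_le by apply le_refl; exact V1.
Qed.

Lemma Umul_assoc_subset X Y Z : upper le X ->
  subset (Umul imp X (Umul imp Y Z)) (Umul imp (Umul imp X Y) Z).
Proof.
  intros HX a [w [[z [Zz Yzw]] Xwa]]; exists z; split; [exact Zz |].
  exists (imp z w); split; [exact Yzw |].
  exact (HX _ _ Xwa (imp_le_imp_imp z w a)).
Qed.

(* For x = y -> (z -> a), the middle factor is x ~> a, the largest b with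
   x <= b -> a. *)
Lemma Umul_assoc_supset X Y Z : upper le X -> upper le Y ->
  subset (Umul imp (Umul imp X Y) Z) (Umul imp X (Umul imp Y Z)).
Proof.
  intros HX HY a [z [Zz [y [Yy Xx]]]].
  set (x := imp y (imp z a)) in *.
  exists (limp x a); split.
  - exists z; split; [exact Zz |].
    apply (HY _ _ Yy), le_trans with (limp x (imp z a)).
    + apply le_imp_limp, le_refl.
    + apply le_imp_limp, le_trans with (limp (imp z a) a);
        [apply le_imp_limp, le_refl | apply limp_le_limp_limp].
  - apply (HX _ _ Xx), le_imp_limp, le_refl.
Qed.

Lemma Uimp_upper Y Z : upper le (Uimp le imp Y Z).
Proof.
  intros a b [V [HV [HVY Va]]] Hab; exists V; split; [| split]; [exact HV | exact HVY |].
  exact (HV _ _ Va Hab).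
Qed.

Lemma Ulimp_upper Y Z : upper le (Ulimp le imp Y Z).
Proof.
  intros a b [V [HV [HYV Va]]] Hab; exists V; split; [| split]; [exact HV | exact HYV |].
  exact (HV _ _ Va Hab).
Qed.

Lemma Umul_Uimp Y Z : subset (Umul imp (Uimp le imp Y Z) Y) Z.
Proof. intros a [y [Yy [V [_ [HVY Vya]]]]]; apply HVY; exists y; split; assumption. Qed.

Lemma Umul_Ulimp Y Z : subset (Umul imp Y (Ulimp le imp Y Z)) Z.
Proof. intros a [v [[V [_ [HYV Vv]]] Yva]]; apply HYV; exists v; split; assumption. Qed.

Lemma Uimp_greatest V Y Z :
  upper le V -> subset (Umul imp V Y) Z -> subset V (Uimp le imp Y Z).
Proof. intros HV HVY a Va; exists V; split; [| split]; assumption. Qed.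

Lemma Ulimp_greatest V Y Z :
  upper le V -> subset (Umul imp Y V) Z -> subset V (Ulimp le imp Y Z).
Proof. intros HV HYV a Va; exists V; split; [| split]; assumption. Qed.

Lemma Uimp_one Y Z : upper le Z -> subset Y Z -> Uimp le imp Y Z one.
Proof.
  intros HZ HYZ; exists (fun a => le one a); split; [| split].
  - intros a b Ha Hab; exact (le_trans Ha Hab).
  - intros a [y [Yy Hya]]; exact (HZ _ _ (HYZ y Yy) (le_of_one_le_imp Hya)).
  - apply le_refl.
Qed.

Lemma Ulimp_one Y Z : subset Y Z -> Ulimp le imp Y Z one.
Proof.
  intro HYZ; exists (fun a => le one a); split; [| split].
  - intros a b Ha Hab; exact (le_trans Ha Hab).
  - intros a [v [Hv Yva]].
    assert (v = one) as -> by exact (le_antisym (le_one v) Hv).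
    rewrite imp_one_l in Yva; exact (HYZ a Yva).
  - apply le_refl.
Qed.

Lemma Umul_id_r Z V : V one -> subset (Umul imp Z V) Z -> Umul imp Z V = Z.
Proof. intros V1 HZV; apply subset_antisym; [exact HZV | exact (Umul_unit_r Z V V1)]. Qed.

Lemma Umul_id_l Z V : V one -> subset (Umul imp V Z) Z -> Umul imp V Z = Z.
Proof. intros V1 HVZ; apply subset_antisym; [exact HVZ | exact (Umul_unit_l V Z V1)]. Qed.

Lemma Uimp_id V Z :
  upper le Z -> V one -> subset (Umul imp Z V) Z -> Uimp le imp V Z = Z.
Proof.
  intros HZ V1 HZV; apply subset_antisym.
  - intros a Ha; exact (Umul_Uimp (Umul_unit_r _ _ V1 a Ha)).
  - exact (Uimp_greatest HZ HZV).
Qed.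

Lemma Ulimp_id V Z :
  upper le Z -> V one -> subset (Umul imp V Z) Z -> Ulimp le imp V Z = Z.
Proof.
  intros HZ V1 HVZ; apply subset_antisym.
  - intros a Ha; exact (Umul_Ulimp (Umul_unit_l _ _ V1 a Ha)).
  - exact (Ulimp_greatest HZ HVZ).
Qed.

Lemma Umul_subset_mu F X Y Z :
  subset (Umul imp F F) F -> subset X F -> subset Y F ->
  subset (Umul imp X Y) Z -> subset (Umul imp X Y) (mu F Z).
Proof.
  intros HFF HXF HYF HXYZ a Ha; split; [| exact (HXYZ a Ha)].
  exact (HFF a (Umul_subset HXF HYF Ha)).
Qed.

End UpperSets.

Section MuResiduals.

Variables (A : Type) (le : A -> A -> Prop) (imp limp : A -> A -> A) (one : A).
Hypothesis HA : is_integral_quantum_B_algebra le imp limp one.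
Variables X F : A -> Prop.
Hypotheses (HX : upper le X) (HF : upper le F).
Hypothesis HFF : subset (Umul imp F F) F.

Local Notation W := (mu F X).
Local Notation WX := (Uimp le imp W X).
Local Notation WlX := (Ulimp le imp W X).
Local Notation M := (mu F WX).
Local Notation N := (mu F WlX).

Let W_upper : upper le W := mu_upper HF HX.
Let WX_upper : upper le WX := @Uimp_upper _ le imp W X.
Let WlX_upper : upper le WlX := @Ulimp_upper _ le imp W X.
Let M_upper : upper le M := mu_upper HF WX_upper.
Let N_upper : upper le N := mu_upper HF WlX_upper.

Lemma Umul_mu_Ulimp_subset : subset (Umul imp W N) W.
Proof.
  apply Umul_subset_mu; [exact HFF | apply mu_subset_l | apply mu_subset_l |].
  intros a Ha; exact (Umul_Ulimp (le:=le) (Umul_subset (subset_refl _) (@mu_subset_r _ F _) Ha)).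
Qed.

Lemma Umul_mu_Uimp_subset : subset (Umul imp M W) W.
Proof.
  apply Umul_subset_mu; [exact HFF | apply mu_subset_l | apply mu_subset_l |].
  intros a Ha; exact (Umul_Uimp (le:=le) (Umul_subset (@mu_subset_r _ F _) (subset_refl _) Ha)).
Qed.

Lemma Umul_Uimp_mu_Uimp_subset : subset (Umul imp WX M) WX.
Proof.
  apply Uimp_greatest; [exact (Umul_upper HA WX_upper) |].
  intros a Ha; apply (Umul_assoc_supset HA WX_upper M_upper) in Ha.
  exact (Umul_Uimp (le:=le) (Umul_subset (subset_refl _) Umul_mu_Uimp_subset Ha)).
Qed.

Lemma Umul_mu_Ulimp_Ulimp_subset : subset (Umul imp N WlX) WlX.
Proof.
  apply Ulimp_greatest; [exact (Umul_upper HA N_upper) |].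
  intros a Ha; apply (Umul_assoc_subset HA W_upper) in Ha.
  exact (Umul_Ulimp (le:=le) (Umul_subset Umul_mu_Ulimp_subset (subset_refl _) Ha)).
Qed.

Lemma Umul_mu_Uimp_closed : subset (Umul imp M M) M.
Proof.
  apply Umul_subset_mu; [exact HFF | apply mu_subset_l | apply mu_subset_l |].
  intros a Ha; exact (Umul_Uimp_mu_Uimp_subset (Umul_subset (@mu_subset_r _ F _) (subset_refl _) Ha)).
Qed.

Lemma Umul_mu_Ulimp_closed : subset (Umul imp N N) N.
Proof.
  apply Umul_subset_mu; [exact HFF | apply mu_subset_l | apply mu_subset_l |].
  intros a Ha; exact (Umul_mu_Ulimp_Ulimp_subset (Umul_subset (subset_refl _) (@mu_subset_r _ F _) Ha)).
Qed.

End MuResiduals.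

Theorem proposition3p3
  (A : Type) (le : A -> A -> Prop) (imp limp : A -> A -> A) (one : A)
  (HA : is_integral_quantum_B_algebra le imp limp one)
  (X F : A -> Prop)
  (HX : upper le X) (HF : upper le F)
  (HFf : is_filter le imp F)
  (H1X : X one) (H1F : F one) :
  let W := mu F X in
  let WX := Uimp le imp W X in
  let WlX := Ulimp le imp W X in
  (* (1) *)
  (Umul imp W (mu F WlX) = W /\ W = Umul imp (mu F WX) W) /\
  (* (2) *)
  Uimp le imp (mu F WX) WX = WX /\
  (* (3) *)
  Ulimp le imp (mu F WlX) WlX = WlX /\
  (* (4) *)
  Umul imp WX (mu F WX) = WX /\
  (* (5) *)
  Umul imp (mu F WlX) WlX = WlX /\
  (* (6) *)
  (mu F WX = Umul imp (mu F WX) (mu F WX) /\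
   (mu F WX one -> is_filter le imp (mu F WX))) /\
  (* (7) *)
  (mu F WlX = Umul imp (mu F WlX) (mu F WlX) /\
   (mu F WlX one -> is_filter le imp (mu F WlX))).
Proof.
  intros W WX WlX.
  destruct HFf as [_ [_ HFF]].
  pose proof (Uimp_one HA HX (@mu_subset_r _ F X)) as WX1.
  pose proof (Ulimp_one HA (@mu_subset_r _ F X)) as WlX1.
  assert (M1 : mu F WX one) by (split; assumption).
  assert (N1 : mu F WlX one) by (split; assumption).
  pose proof (@Uimp_upper _ le imp W X) as WX_upper.
  pose proof (@Ulimp_upper _ le imp W X) as WlX_upper.
  pose proof (Umul_mu_Uimp_closed HA (X := X) HF HFF) as M_closed.
  pose proof (Umul_mu_Ulimp_closed HA HX HF HFF) as N_closed.
  split; [split | split; [| split; [| split; [| split; [| split]]]]].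
  - exact (Umul_id_r HA N1 (Umul_mu_Ulimp_subset HFF)).
  - exact (eq_sym (Umul_id_l HA M1 (Umul_mu_Uimp_subset HFF))).
  - exact (Uimp_id HA WX_upper M1 (Umul_Uimp_mu_Uimp_subset HA HF HFF)).
  - exact (Ulimp_id HA WlX_upper N1 (Umul_mu_Ulimp_Ulimp_subset HA HX HF HFF)).
  - exact (Umul_id_r HA M1 (Umul_Uimp_mu_Uimp_subset HA HF HFF)).
  - exact (Umul_id_l HA N1 (Umul_mu_Ulimp_Ulimp_subset HA HX HF HFF)).
  - split; [exact (eq_sym (Umul_id_r HA M1 M_closed)) |].
    intros _; split; [exists one; exact M1 |].
    split; [exact (mu_upper HF WX_upper) | exact M_closed].
  - split; [exact (eq_sym (Umul_id_r HA N1 N_closed)) |].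
    intros _; split; [exists one; exact N1 |].
    split; [exact (mu_upper HF WlX_upper) | exact N_closed].
Qed.
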